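(* Let $G=\mathbb{Z}/2$, regarded as a one-object category, with $R_0=\ast$ and $c:\ast\to G$ the unique functor, so that $\mathbf{D}_G^{op}$ consists of two objects and two parallel arrows between them. Let $\mathcal{T}=\mathbf{Cat}$ be the tribe of small categories whose fibrations are the isofibrations. For a small category $C$, let $X=(C,\mathrm{id}_C)\in\mathbf{Cat}^{G^{op}}$ be $C$ with the trivial action. Then $X$ is $p$-fibrant (i.e. $p^*X$ is Reedy fibrant in $\mathbf{Cat}^{\mathbf{D}_G^{op}}$) if and only if the diagonal functor $C\to C\times C$ is an isofibration, if and only if $C$ is gaunt (every isomorphism of $C$ is an identity). In particular, the $p$-fibrations on $\mathbf{Cat}^{G^{op}}_f$ do not coincide with the pointwise fibrations.
   Context: An isofibration is a functor $F:A\to B$ such that for every object $a$ of $A$ and isomorphism $F(a)\cong b$ in $B$ there is an isomorphism $a\cong a'$ in $A$ mapped to it. $\mathbf{Cat}$ with isofibrations as fibrations is a tribe. Construction of $\mathbf{D}_G$ and $p$: with $\mathbf{F}$ the free-category comonad on $\mathbf{Cat}$, $\mathbf{F}_\simeq(G)$ is the pushout of $\ast\leftarrow\mathbf{F}(\ast)\to\mathbf{F}(G)$, with induced functor $p_0:\mathbf{F}_\simeq(G)\to G$; a ''free isomorphism'' is the image of a length-one path in $G$. In the twisted arrow category, morphisms from $u:a\to b$ to $u':a'\to b'$ are pairs $(s:a'\to a,t:b\to b')$ with $u'=tus$. $\mathbf{D}_G$ is the full subcategory of $\mathbf{Tw}(\mathbf{F}_\simeq(G))$ on the identity arrow and the free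 isomorphisms; $p$ sends $u:a\to b$ to $p_0(b)$ and $(s,t)$ to $p_0(t)$. A diagram $X$ is $p$-fibrant if $p^*X$ is Reedy fibrant, i.e. each matching map of $p^*X$ (to the limit over non-identity maps into the object in $\mathbf{D}_G$) is a fibration. *)

From Stdlib Require Import FunctionalExtensionality.
Set Implicit Arguments.
Unset Strict Implicit.

Record Cat := {
  ob :> Type;
  hom : ob -> ob -> Type;
  idm : forall a, hom a a;
  comp : forall a b c, hom b c -> hom a b -> hom a c;
  comp_id_l : forall a b (f : hom a b), comp (idm b) f = f;
  comp_id_r : forall a b (f : hom a b), comp f (idm a) = f;
  comp_assoc : forall a b c d (f : hom a b) (g : hom b c) (h : hom c d),
      comp h (comp g f) = comp (comp h g) f
}.
Arguments hom {_} _ _.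
Arguments idm {_} _.
Arguments comp {_ _ _ _} _ _.

Definition is_iso (C : Cat) (a b : C) (f : hom a b) : Prop :=
  exists g : hom b a, comp g f = idm a /\ comp f g = idm b.

Record Functor (C D : Cat) := {
  fob :> C -> D;
  fhom : forall a b, hom a b -> hom (fob a) (fob b);
  fhom_id : forall a, fhom (idm a) = idm (fob a);
  fhom_comp : forall a b c (f : hom a b) (g : hom b c),
      fhom (comp g f) = comp (fhom g) (fhom f)
}.
Arguments fhom {C D} _ {a b} _.

Definition isofibration (C D : Cat) (F : Functor C D) : Prop :=
  forall (a : C) (b : D) (i : hom (F a) b), is_iso i ->
    exists (a' : C) (j : hom a a') (e : F a' = b),
      is_iso j /\ eq_rect (F a') (fun y => hom (F a) y) (fhom F j) b e = i.

Definition gaunt (C : Cat) : Prop :=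
  forall (a b : C) (f : hom a b), is_iso f ->
    exists e : a = b, eq_rect a (fun y => hom a y) (idm a) b e = f.

Definition TermCat : Cat.
Proof.
  refine {| ob := unit; hom := fun _ _ => unit; idm := fun _ => tt;
            comp := fun _ _ _ _ _ => tt |};
  intros; repeat match goal with u : unit |- _ => destruct u end; reflexivity.
Defined.

Definition toTerm (C : Cat) : Functor C TermCat.
Proof.
  refine {| fob := (fun _ => tt) : C -> ob TermCat;
            fhom := fun _ _ _ => (tt : @hom TermCat tt tt) |};
  reflexivity.
Defined.

Definition idFunctor (C : Cat) : Functor C C.
Proof.
  refine {| fob := fun x => x; fhom := fun _ _ f => f |}; reflexivity.
Defined.

Definition ProdCat (C D : Cat) : Cat.
Proof.
  refine {| ob := (ob C * ob D)%type;
            hom := fun x y => (hom (fst x) (fst y) * hom (snd x) (snd y))%type;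
            idm := fun x => (idm (fst x), idm (snd x));
            comp := fun x y z g f => (comp (fst g) (fst f), comp (snd g) (snd f)) |}.
  - intros [] [] []; simpl; rewrite !comp_id_l; reflexivity.
  - intros [] [] []; simpl; rewrite !comp_id_r; reflexivity.
  - intros [] [] [] [] [] [] []; simpl; rewrite !comp_assoc; reflexivity.
Defined.

Definition diagonal (C : Cat) : Functor C (ProdCat C C).
Proof.
  refine {| fob := fun x => ((x, x) : ob (ProdCat C C));
            fhom := fun a b f => ((f, f) : @hom (ProdCat C C) (a, a) (b, b)) |};
  intros; reflexivity.
Defined.

Definition IProdCat (I : Type) (A : I -> Cat) : Cat.
Proof.
  refine {| ob := forall i, ob (A i);
            hom := fun x y => forall i, hom (x i) (y i);
            idm := fun x i => idm (x i);
            comp := fun x y z g f i => comp (g i) (f i) |}.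
  - intros; apply functional_extensionality_dep; intro; apply comp_id_l.
  - intros; apply functional_extensionality_dep; intro; apply comp_id_r.
  - intros; apply functional_extensionality_dep; intro; apply comp_assoc.
Defined.

Definition ITuple (I : Type) (C : Cat) (A : I -> Cat) (F : forall i, Functor C (A i))
  : Functor C (IProdCat A).
Proof.
  refine {| fob := (fun x i => F i x) : C -> ob (IProdCat A);
            fhom := fun a b f => (fun i => fhom (F i) f) : @hom (IProdCat A) _ _ |}.
  - intros; apply functional_extensionality_dep; intro; apply fhom_id.
  - intros; apply functional_extensionality_dep; intro; apply fhom_comp.
Defined.

(** * G = Z/2 as a one-object category: morphisms are bool, composition xorb
    (true = the non-trivial element g). *)

(** An object of Cat^{G^op}: a small category with a G-action
    (act b : C -> C the action of b).  For the theorem only the trivial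
    action is used. *)
Record GDiag := { gcar : Cat; gact : bool -> Functor gcar gcar }.

Definition trivialAction (C : Cat) : GDiag :=
  {| gcar := C; gact := fun _ => idFunctor C |}.

Definition pointwise_fibrant (X : GDiag) : Prop :=
  isofibration (toTerm (gcar X)).

(** Objects of D_G (full subcategory of Tw(F_≃(G))): the identity arrow [Did]
    and the free isomorphism g [Dg].  F_≃(G) is the free monoid on g, and a
    twisted-arrow morphism id -> g is a pair (s,t) with t*s = g, i.e.
    (s,t) = (g,1) [s_g_t_1] or (s,t) = (1,g) [s_1_t_g]; there are no maps
    g -> id and only identities as endomorphisms.  So the non-identity arrows
    of D_G are exactly the two parallel arrows Did -> Dg given by DGarr. *)
Inductive DGob := Did | Dg.
Inductive DGarr := s_g_t_1 | s_1_t_g.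

(** p : D_G -> G sends (s,t) to p_0(t). *)
Definition p_arr (a : DGarr) : bool :=
  match a with s_g_t_1 => false | s_1_t_g => true end.

(** A diagram Y : D_G^op -> Cat: categories Y(Did), Y(Dg), and for each
    arrow a : Did -> Dg of D_G a functor Y(a) : Y(Dg) -> Y(Did).
    (There are no non-trivial composites in D_G, so no further equations.) *)
Record DGopDiag := {
  Yid : Cat;
  Yg : Cat;
  Yarr : DGarr -> Functor Yg Yid
}.

Definition pullback_p (X : GDiag) : DGopDiag :=
  {| Yid := gcar X; Yg := gcar X; Yarr := fun a => gact X (p_arr a) |}.

(** The matching object at d is the limit of Y over
    the non-identity maps d' -> d of D_G.  For d = Did there are none (limit
    = terminal category); for d = Dg these are the two arrows DGarr, and the
    category of them over Dg is discrete, so the limit is the product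
    prod_{a : DGarr} Y(Did). *)
Definition matching_Did (Y : DGopDiag) : Functor (Yid Y) TermCat := toTerm (Yid Y).
Definition matching_Dg (Y : DGopDiag) :
  Functor (Yg Y) (IProdCat (fun _ : DGarr => Yid Y)) :=
  ITuple (fun a : DGarr => Yarr Y a).

Definition reedy_fibrant (Y : DGopDiag) : Prop :=
  isofibration (matching_Did Y) /\ isofibration (matching_Dg Y).

Definition p_fibrant (X : GDiag) : Prop := reedy_fibrant (pullback_p X).

(* A functor into a gaunt category is an isofibration: an isomorphism out of
   [F a] is an identity, and lifts to the identity of [a].  Gauntness passes to
   products, so for gaunt [C] both matching maps of the trivially acted [C]
   (the map [C -> 1] at [Did], and the diagonal [C -> C^2] indexed by the two
   arrows [Did -> Dg] at [Dg]) and the binary diagonal are isofibrations.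
   Conversely, lifting the isomorphism [(1_a, f) : (a, a) ~ (a, b)] along a
   diagonal gives an object [a'] with [(a', a') = (a, b)], which forces [f] to
   be an identity.  The indiscrete category on two objects is not gaunt. *)
From Stdlib Require Import FunctionalExtensionality Eqdep.

Lemma is_iso_idm (C : Cat) (a : C) : is_iso (idm a).
Proof. exists (idm a); rewrite comp_id_l; auto. Qed.

Lemma isofibration_into_gaunt (C D : Cat) (F : Functor C D) :
  gaunt D -> isofibration F.
Proof.
  intros gauntD a b i iso_i.
  destruct (gauntD _ _ i iso_i) as [e He]; destruct e; cbn in He; subst i.
  exists a, (idm a), eq_refl; split.
  - apply is_iso_idm.
  - apply fhom_id.
Qed.

Lemma gaunt_TermCat : gaunt TermCat.
Proof. intros [] [] [] _; exists eq_refl; reflexivity. Qed.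

Lemma gaunt_ProdCat (C D : Cat) : gaunt C -> gaunt D -> gaunt (ProdCat C D).
Proof.
  intros gauntC gauntD [a1 a2] [b1 b2] [f1 f2] [[g1 g2] [Hgf Hfg]].
  cbn in *; injection Hgf as Hgf1 Hgf2; injection Hfg as Hfg1 Hfg2.
  destruct (gauntC _ _ f1 (ex_intro _ g1 (conj Hgf1 Hfg1))) as [e1 He1].
  destruct (gauntD _ _ f2 (ex_intro _ g2 (conj Hgf2 Hfg2))) as [e2 He2].
  destruct e1, e2; cbn in He1, He2; subst f1 f2.
  exists eq_refl; reflexivity.
Qed.

Lemma gaunt_IProdCat (I : Type) (A : I -> Cat) :
  (forall i, gaunt (A i)) -> gaunt (IProdCat A).
Proof.
  intros gauntA x y f [g [Hgf Hfg]].
  assert (gaunt_at : forall i, exists e : x i = y i,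
             eq_rect (x i) (hom (x i)) (idm (x i)) (y i) e = f i).
  { intro i; apply gauntA; exists (g i); split.
    - exact (f_equal (fun h => h i) Hgf).
    - exact (f_equal (fun h => h i) Hfg). }
  assert (Exy : x = y).
  { apply functional_extensionality_dep; intro i.
    destruct (gaunt_at i) as [e _]; exact e. }
  clear g Hgf Hfg; destruct Exy; exists eq_refl.
  apply functional_extensionality_dep; intro i.
  destruct (gaunt_at i) as [e He]; rewrite (UIP_refl _ _ e) in He; exact He.
Qed.

Lemma gaunt_of_isofibration_diagonal (C : Cat) :
  isofibration (diagonal C) -> gaunt C.
Proof.
  intros fib a b f [g [Hgf Hfg]].
  set (i := (idm a, f) : @hom (ProdCat C C) (a, a) (a, b)).
  assert (iso_i : is_iso i).
  { exists ((idm a, g) : @hom (ProdCat C C) (a, b) (a, a)).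
    cbn; rewrite comp_id_l, Hgf, Hfg; auto. }
  destruct (fib a (a, b) i iso_i) as [a' [j [e [_ He]]]].
  (* Abstracting the target [(a, b)] lets the lifting equation [e] be destructed. *)
  enough (lifted_components : forall (y : C * C) (e : (a', a') = y)
      (k : @hom (ProdCat C C) (a, a) y),
      eq_rect (a', a') (fun y => @hom (ProdCat C C) (a, a) y) (j, j) y e = k ->
      exists e' : fst y = snd y, eq_rect _ (hom a) (fst k) _ e' = snd k)
    by exact (lifted_components (a, b) e i He).
  intros y e' k Hk; destruct e'; subst k; exists eq_refl; reflexivity.
Qed.

Lemma gaunt_of_isofibration_DGarr_diagonal (C : Cat) :
  isofibration (ITuple (fun _ : DGarr => idFunctor C)) -> gaunt C.
Proof.
  intros fib a b f [g [Hgf Hfg]].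
  set (y := fun k : DGarr => match k with s_g_t_1 => a | s_1_t_g => b end).
  set (i := (fun k => match k return hom a (y k) with
                      | s_g_t_1 => idm a | s_1_t_g => f end)
        : @hom (IProdCat (fun _ : DGarr => C)) (fun _ => a) y).
  assert (iso_i : is_iso i).
  { exists ((fun k => match k return hom (y k) a with
                      | s_g_t_1 => idm a | s_1_t_g => g end)
        : @hom (IProdCat (fun _ : DGarr => C)) y (fun _ => a)).
    split; cbn; apply functional_extensionality_dep; intros []; cbn;
      rewrite ?comp_id_l; auto. }
  destruct (fib a y i iso_i) as [a' [j [e [_ He]]]].
  enough (lifted_components : forall (z : DGarr -> C) (e : (fun _ => a') = z)
      (k : forall x, hom a (z x)),
      eq_rect (fun _ => a') (fun z => forall x, hom a (z x)) (fun _ => j) z e = k ->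
      exists e' : z s_g_t_1 = z s_1_t_g,
        eq_rect _ (hom a) (k s_g_t_1) _ e' = k s_1_t_g)
    by exact (lifted_components y e i He).
  intros z e' k Hk; destruct e'; subst k; exists eq_refl; reflexivity.
Qed.

Lemma p_fibrant_trivialAction_iff_gaunt (C : Cat) :
  p_fibrant (trivialAction C) <-> gaunt C.
Proof.
  split.
  - intros [_ fib_Dg]; exact (gaunt_of_isofibration_DGarr_diagonal _ fib_Dg).
  - intro gauntC; split; apply isofibration_into_gaunt.
    + exact gaunt_TermCat.
    + apply gaunt_IProdCat; intros _; exact gauntC.
Qed.

Definition Indiscrete (T : Type) : Cat.
Proof.
  refine {| ob := T; hom := fun _ _ => unit; idm := fun _ => tt;
            comp := fun _ _ _ _ _ => tt |};
  intros; repeat match goal with u : unit |- _ => destruct u end; reflexivity.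
Defined.

Lemma Indiscrete_not_gaunt (T : Type) (x y : T) :
  x <> y -> ~ gaunt (Indiscrete T).
Proof.
  intros neq_xy gauntT.
  destruct (gauntT x y tt) as [e _]; [exists tt; auto | exact (neq_xy e)].
Qed.

Lemma isofibration_diagonal_iff_gaunt (C : Cat) :
  isofibration (diagonal C) <-> gaunt C.
Proof.
  split.
  - apply gaunt_of_isofibration_diagonal.
  - intro gauntC; apply isofibration_into_gaunt, gaunt_ProdCat; exact gauntC.
Qed.

Theorem mainTheorem7 :
  (forall C : Cat,
      (p_fibrant (trivialAction C) <-> isofibration (diagonal C)) /\
      (isofibration (diagonal C) <-> gaunt C)) /\
  (exists C : Cat,
      pointwise_fibrant (trivialAction C) /\ ~ p_fibrant (trivialAction C)).
Proof.
  split.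
  - intro C.
    pose proof (p_fibrant_trivialAction_iff_gaunt C).
    pose proof (isofibration_diagonal_iff_gaunt C).
    tauto.
  - exists (Indiscrete bool); split.
    + apply isofibration_into_gaunt, gaunt_TermCat.
    + intro fib; apply p_fibrant_trivialAction_iff_gaunt in fib.
      exact (@Indiscrete_not_gaunt bool true false ltac:(discriminate) fib).
Qed.
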